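(* Let $R$ be a commutative ring. An object $(M_t,M_h;\mu_a,\mu_b)$ of $\mathrm{Rep}_R(\varkappa)$ lies in ${}^{\perp}\mathrm{Rel}_R(\varkappa)$ if and only if $M_h=0$.
   Context: $\mathrm{Rep}_R(\varkappa)$: objects $(M_t,M_h;\mu_a,\mu_b)$ with $\mu_a,\mu_b\in\mathrm{Hom}_R(M_t,M_h)$, morphisms pairs of $R$-linear maps commuting with the $\mu$'s. $\mathrm{Rel}_R(\varkappa)$: full subcategory of objects with $\ker(\mu_a)\cap\ker(\mu_b)=0$. ${}^{\perp}\mathrm{Rel}_R(\varkappa)$ is the full subcategory of objects $T$ with $\mathrm{Hom}(T,F)=0$ for every $F\in\mathrm{Rel}_R(\varkappa)$. *)

From HB Require Import structures.
From mathcomp Require Import all_boot all_algebra.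
Set Implicit Arguments. Unset Strict Implicit. Unset Printing Implicit Defensive.
Import GRing.Theory.
Local Open Scope ring_scope.

Record kron_rep (R : comPzRingType) := KronRep {
  Mt : lmodType R;
  Mh : lmodType R;
  mu_a : {linear Mt -> Mh};
  mu_b : {linear Mt -> Mh}
}.

Definition is_kron_morph (R : comPzRingType) (T F : kron_rep R)
  (ft : {linear Mt T -> Mt F}) (fh : {linear Mh T -> Mh F}) : Prop :=
  (forall x, fh (mu_a T x) = mu_a F (ft x)) /\
  (forall x, fh (mu_b T x) = mu_b F (ft x)).

Definition kron_hom_zero (R : comPzRingType) (T F : kron_rep R) : Prop :=
  forall (ft : {linear Mt T -> Mt F}) (fh : {linear Mh T -> Mh F}),
    is_kron_morph ft fh -> (forall x, ft x = 0) /\ (forall y, fh y = 0).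

Definition in_Rel (R : comPzRingType) (F : kron_rep R) : Prop :=
  forall x : Mt F, mu_a F x = 0 -> mu_b F x = 0 -> x = 0.

Definition in_perp_Rel (R : comPzRingType) (T : kron_rep R) : Prop :=
  forall F : kron_rep R, in_Rel F -> kron_hom_zero T F.

From HB Require Import structures.
From mathcomp Require Import all_boot all_algebra.
Local Open Scope ring_scope.
Import GRing.Theory.
Set Implicit Arguments. Unset Strict Implicit.

(* If [M_h = 0], the head component of any morphism into an object of Rel
   vanishes, and then so does its tail component, since it lands in
   [ker mu_a ∩ ker mu_b = 0].  Conversely, [(M_h ⊕ M_h, M_h; pr_1, pr_2)] lies
   in Rel and receives the morphism [((mu_a, mu_b), id)] from [T], whose head
   component is zero only if [M_h = 0]. *)

Section KroneckerRel.
Variable R : comPzRingType.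

Definition lin_pair (U V W : lmodType R) (f : {linear U -> V}) (g : {linear U -> W})
  : U -> (V * W)%type := fun x => (f x, g x).

Lemma lin_pair_is_linear (U V W : lmodType R) (f : {linear U -> V})
    (g : {linear U -> W}) : linear (lin_pair f g).
Proof. by move=> a x y; rewrite /lin_pair !linearP. Qed.

HB.instance Definition _ (U V W : lmodType R) (f : {linear U -> V})
    (g : {linear U -> W}) :=
  GRing.isLinear.Build R U (V * W)%type _ (lin_pair f g) (lin_pair_is_linear f g).

Definition kron_proj_rep (M : lmodType R) : kron_rep R :=
  @KronRep R (M * M)%type M fst snd.

Lemma kron_proj_rep_Rel (M : lmodType R) : in_Rel (kron_proj_rep M).
Proof. by case=> x1 x2 /= -> ->. Qed.

Lemma kron_morph_to_proj_rep (T : kron_rep R) :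
  @is_kron_morph R T (kron_proj_rep (Mh T))
    (lin_pair (mu_a T) (mu_b T)) idfun.
Proof. by []. Qed.

Lemma in_perp_Rel_Mh_eq0 (T : kron_rep R) :
  in_perp_Rel T -> forall y : Mh T, y = 0.
Proof.
move=> perpT y.
have [_ idfun0] := perpT _ (@kron_proj_rep_Rel (Mh T)) _ _
  (@kron_morph_to_proj_rep T).
exact: idfun0.
Qed.

Lemma kron_morph_Rel_tail_eq0 (T F : kron_rep R)
    (ft : {linear Mt T -> Mt F}) (fh : {linear Mh T -> Mh F}) :
  in_Rel F -> is_kron_morph ft fh -> (forall y, fh y = 0) ->
  forall x, ft x = 0.
Proof.
move=> RelF [fh_a fh_b] fh0 x.
by apply: RelF; rewrite -?fh_a -?fh_b fh0.
Qed.

End KroneckerRel.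

Theorem lemma3p8 (R : comPzRingType) (T : kron_rep R) :
  in_perp_Rel T <-> (forall y : Mh T, y = 0).
Proof.
split; first exact: in_perp_Rel_Mh_eq0.
move=> Mh0 F RelF ft fh morph.
have fh0 : forall y, fh y = 0 by move=> y; rewrite (Mh0 y) linear0.
split; [exact: kron_morph_Rel_tail_eq0 morph fh0 | exact: fh0].
Qed.
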